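(* Fix $c\in\{1,\dots,K-1\}$ and suppose the density $\bar p_c$ satisfies the generation assumption $$\bar p_c(\bm x,\bar Y)=\binom{K-1}{c}^{-1}\sum_{y\notin \bar Y}p(\bm x,y)\qquad(\bm x\in\mathcal X,\ \bar Y\in\overline{\mathcal Y}_c).$$ Then for any loss function $\ell$ and any decision function $\bm g$ (for which the expectations below are finite), the classification risk satisfies $R(\bm g)=R_c(\bm g)$, where $$R_c(\bm g)=\mathbb E_{\bar p_c(\bm x,\bar Y)}\big[\bar\ell(\bm g(\bm x),\bar Y)\big],\qquad \bar\ell(\bm g(\bm x),\bar Y):=\sum_{y=1}^K\ell(\bm g(\bm x),y)-\frac{K-1}{|\bar Y|}\sum_{y\in\bar Y}\ell(\bm g(\bm x),y).$$
   Context: Let $K\ge 2$, $\mathcal X\subseteq\mathbb R^d$ the feature space and $\mathcal Y=\{1,\dots,K\}$ the label space. Let $p(\bm x,y)$ be a joint density on $\mathcal X\times\mathcal Y$ with marginal density $p(\bm x)$. For $c\in\{1,\dots,K-1\}$, $\overline{\mathcal Y}_c$ denotes the collection of all $c$-element subsets of $\{1,\dots,K\}$ (''complementary-label sets'' of size $c$), and $\bar p_c(\bm x,\bar Y)$ is a density on $\mathcal X\times\overline{\mathcal Y}_c$. A decision function is a map $\bm g:\mathcal X\to\mathbb R^K$, a loss is a function $\ell:\mathbb R^K\times\mathcal Y\to[0,\infty)$, and the classification risk is $R(\bm g)=\mathbb E_{p(\bm x,y)}[\ell(\bm g(\bm x),y)]$. *)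

From HB Require Import structures.
From mathcomp Require Import all_boot all_order all_algebra.
Set Implicit Arguments. Unset Strict Implicit. Unset Printing Implicit Defensive.
Import Order.TTheory GRing.Theory Num.Theory.
Local Open Scope ring_scope.

(* Labels y in {1..K} are represented by 'I_K (i.e. {0..K-1}).
   Complementary-label sets are finite sets {set 'I_K}; the collection
   \bar{Y}_c is those of cardinality c.
   Expectation over x is modelled by an arbitrary functional
   integ : (X -> R) -> R (e.g. Lebesgue integration over X against dx);
   E_{p(x,y)}[f(x,y)] = integ (fun x => \sum_y p x y * f x y). *)

Definition risk (R : realFieldType) (K : nat) (X : Type)
  (integ : (X -> R) -> R) (p : X -> 'I_K -> R)
  (loss : 'rV[R]_K -> 'I_K -> R) (g : X -> 'rV[R]_K) : R :=
  integ (fun x => \sum_(y < K) p x y * loss (g x) y).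

Definition comp_loss (R : realFieldType) (K : nat)
  (loss : 'rV[R]_K -> 'I_K -> R) (v : 'rV[R]_K) (Yb : {set 'I_K}) : R :=
  \sum_(y < K) loss v y - (K.-1)%:R / (#|Yb|)%:R * \sum_(y in Yb) loss v y.

Definition risk_c (R : realFieldType) (K : nat) (X : Type) (c : nat)
  (integ : (X -> R) -> R) (pbar : X -> {set 'I_K} -> R)
  (loss : 'rV[R]_K -> 'I_K -> R) (g : X -> 'rV[R]_K) : R :=
  integ (fun x => \sum_(Yb : {set 'I_K} | #|Yb| == c)
                     pbar x Yb * comp_loss loss (g x) Yb).

From HB Require Import structures.
From mathcomp Require Import all_boot all_order all_algebra.
Import Order.TTheory GRing.Theory Num.Theory.
Local Open Scope ring_scope.
From mathcomp Require Import ring zify.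
From Stdlib Require Import FunctionalExtensionality.

(* The identity R(g) = R_c(g) holds pointwise in x: expanding pbar_c, the
   weight of l(g(x), y) against p(x, y') is a count of c-sets Ybar with
   y' \notin Ybar (and y \in Ybar).  There are C(K-1, c) sets avoiding y', and
   C(K-2, c-1) of them also contain a given y <> y'.  Since
   (K-1)/c * C(K-2, c-1) = C(K-1, c), the coefficient of l(g(x), y) p(x, y')
   is C(K-1, c) - C(K-1, c) = 0 for y <> y', and C(K-1, c) for y = y',
   which the normalisation cancels. *)

Section CountingDraws.

Variables (R : realFieldType) (T : finType) (c : nat).

Lemma sum_draws_subset (B : {set T}) :
  \sum_(Y : {set T} | #|Y| == c) ((Y \subset B)%:R : R) = 'C(#|B|, c)%:R.
Proof.
rewrite -cards_draws -sum1_card natr_sum big_mkcond [RHS]big_mkcond /=.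
by apply: eq_bigr => Y _; rewrite inE andbC; case: (_ == _); case: (_ \subset _).
Qed.

Lemma subsetC1 (Y : {set T}) y : (Y \subset [set~ y]) = (y \notin Y).
Proof. by rewrite subsetC -disjoints_subset disjoints1. Qed.

Lemma subsetC2 (Y : {set T}) y z :
  (Y \subset ~: [set y; z]) = (y \notin Y) && (z \notin Y).
Proof. by rewrite setCU subsetI !subsetC1. Qed.

Lemma sum_draws_notin y :
  \sum_(Y : {set T} | #|Y| == c) ((y \notin Y)%:R : R) = 'C(#|T|.-1, c)%:R.
Proof.
rewrite -(cardsC1 y) -sum_draws_subset.
by apply: eq_bigr => Y _; rewrite subsetC1.
Qed.

Lemma sum_draws_notin_in y z : (0 < c)%N -> z != y ->
  \sum_(Y : {set T} | #|Y| == c) (((y \notin Y) && (z \in Y))%:R : R)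
    = 'C(#|T|.-2, c.-1)%:R.
Proof.
move=> c_gt0 zy.
have split_notin (Y : {set T}) : ((y \notin Y) && (z \in Y))%:R
    = (Y \subset [set~ y])%:R - (Y \subset ~: [set y; z])%:R :> R.
  by rewrite subsetC1 subsetC2; case: (y \in Y); case: (z \in Y); rewrite ?subr0 ?subrr.
rewrite (eq_bigr _ (fun Y _ => split_notin Y)) sumrB !sum_draws_subset.
have -> : #|~: [set y; z]| = #|T|.-2.
  by rewrite -(cardsC [set y; z]) cards2 eq_sym zy add2n.
rewrite cardsC1.
have : (2 <= #|T|)%N by have := max_card [set z; y]; rewrite cards2 zy.
case: #|T| => [|[|n]] // _; case: c c_gt0 => [|m] // _.
by rewrite binS natrD addrAC subrr add0r.
Qed.

Lemma sum_draws_notin_in_weighted (L : T -> R) y : (0 < c)%N ->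
  \sum_(Y : {set T} | #|Y| == c) \sum_z L z * ((y \notin Y) && (z \in Y))%:R
    = 'C(#|T|.-2, c.-1)%:R * (\sum_z L z - L y).
Proof.
move=> c_gt0; rewrite exchange_big /= [\sum_z L z](bigD1 y) //= addrC addrK.
rewrite (bigD1 y) //= big1 ?add0r => [|Y _]; last by rewrite andNb mulr0.
rewrite mulr_sumr; apply: eq_bigr => z zy.
by rewrite -mulr_sumr sum_draws_notin_in // mulrC.
Qed.

End CountingDraws.

Lemma binomial_absorption (R : numFieldType) n k : (0 < k)%N ->
  n.-1%:R / k%:R * 'C(n.-2, k.-1)%:R = 'C(n.-1, k)%:R :> R.
Proof.
case: k => [|k] // _; have k_neq0 : k.+1%:R != 0 :> R by rewrite pnatr_eq0.
by rewrite mulrAC -natrM mul_bin_diag natrM mulrAC mulfV ?mul1r.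
Qed.

Lemma complementary_risk_pointwise (R : realFieldType) (T : finType) (c : nat)
    (P L : T -> R) :
  (0 < c < #|T|)%N ->
  \sum_(Y : {set T} | #|Y| == c)
      ('C(#|T|.-1, c)%:R^-1 * \sum_(y in ~: Y) P y) *
      (\sum_z L z - #|T|.-1%:R / c%:R * \sum_(z in Y) L z)
    = \sum_y P y * L y.
Proof.
move=> /andP[c_gt0 c_lt].
set N : R := 'C(#|T|.-1, c)%:R; set a : R := #|T|.-1%:R / c%:R.
set S := \sum_z L z.
have N_neq0 : N != 0 by rewrite pnatr_eq0 -lt0n bin_gt0; lia.
have expand (Y : {set T}) :
    (\sum_(y in ~: Y) P y) * (S - a * \sum_(z in Y) L z)
  = \sum_y P y * ((y \notin Y)%:R * S
                  - a * \sum_z L z * ((y \notin Y) && (z \in Y))%:R).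
  rewrite big_mkcond mulr_suml; apply: eq_bigr => y _; rewrite inE.
  case: (y \in Y) => /=; rewrite ?mulr0n ?mulr1n.
    by rewrite mul0r (eq_bigr (fun=> 0)) => [|z _]; rewrite ?big1_eq ?(mul0r, mulr0, subr0).
  rewrite (mul1r S) big_mkcond; congr (_ * (_ - _ * _)); apply: eq_bigr => z _.
  by case: (z \in Y); rewrite ?mulr1 ?mulr0.
under eq_bigr do rewrite -mulrA expand mulr_sumr.
rewrite exchange_big; apply: eq_bigr => y _ /=.
rewrite -mulr_sumr -mulr_sumr sumrB -mulr_suml -mulr_sumr.
rewrite sum_draws_notin sum_draws_notin_in_weighted // [a * _]mulrA.
by rewrite /a binomial_absorption // -/N -/S; field.
Qed.

Theorem lemma1 (R : realFieldType) (K : nat) (X : Type)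
  (integ : (X -> R) -> R)
  (p : X -> 'I_K -> R) (pbar : X -> {set 'I_K} -> R) (c : nat)
  (loss : 'rV[R]_K -> 'I_K -> R) (g : X -> 'rV[R]_K) :
  (2 <= K)%N ->
  (1 <= c <= K.-1)%N ->
  (forall x y, 0 <= p x y) ->
  (forall v y, 0 <= loss v y) ->
  (forall x (Yb : {set 'I_K}), #|Yb| = c ->
     pbar x Yb = ('C(K.-1, c))%:R^-1 * \sum_(y in ~: Yb) p x y) ->
  risk integ p loss g = risk_c c integ pbar loss g.
Proof.
move=> K_ge2 c_range _ _ pbarE.
have c_card : (0 < c < #|'I_K|)%N by rewrite card_ord; lia.
rewrite /risk /risk_c; congr integ; apply: functional_extensionality => x.
rewrite -(@complementary_risk_pointwise R _ c (p x) (loss (g x)) c_card) card_ord.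
by apply: eq_bigr => Y /eqP cardY; rewrite pbarE // /comp_loss cardY.
Qed.
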